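(* Let $G_0=(V_0,E_0)$ be a finite graph ($|V_0|<\infty$) and let $(\xi_t)_{t\ge0}$ be the multi-virus contact process on $G_0$ with infection rate $\lambda$, recovery rate $1$ and death function $\phi$. Then for every $\lambda>0$, $$P_\lambda(\xi_t\neq\emptyset \ \text{for all } t)=0,$$ i.e. the process dies out.
   Context: Multi-virus contact process (MVCP): on a graph $G_0=(V_0,E_0)$, $(\xi_t)_{t\ge0}$ is a continuous-time Markov process on $(\mathbb{N}\cup\{\emptyset\})^{V_0}$ ($\mathbb{N}$ includes $0$), where $\xi_t(x)=i$ means node $x$ carries $i$ infections at time $t$ ($0$ = healthy) and $\xi_t(x)=\emptyset$ means $x$ is dead. A function $\phi:\mathbb{N}\to[0,1]$ is non-decreasing with $\phi(0)=0$ and $\phi(k)=1$ for all $k\ge M$, for some constant $M\in\mathbb{N}$. Dynamics: each infection heals independently at rate $1$ (so a live node with $\zeta(x)\ge1$ infections loses one at rate $\zeta(x)$); each infection passes to each current neighbor independently at rate $\lambda$, so a live node $x$ receives an infection at rate $\lambda N_\zeta(x)$, where $N_\zeta(x)=\sum_{y\sim x}\zeta(y)$ sums over neighbors still joined to $x$ by an edge. When a node currently carrying $i$ infections receives an infection, with probability $\phi(i+1)$ it dies, and otherwise its count becomes $i+1$. When a node dies, it, all infections on it, and all edges incident to it are removed from the graph. We write $\xi_t=\emptyset$ if $\xi_t(x)\in\{0,\emptyset\}$ for all $x$. The process dies out if $P_\lambda(\xi_t\ne\emptyset\ \forall t)=0$ and survives if this probability is positive. *)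

From HB Require Import structures.
From mathcomp Require Import all_boot all_order all_algebra.
From mathcomp Require Import all_classical all_reals all_analysis.
Set Implicit Arguments. Unset Strict Implicit. Unset Printing Implicit Defensive.
Import Order.TTheory GRing.Theory Num.Theory.
Local Open Scope ring_scope.

(* A configuration of the MVCP on the vertex set V:
   [Some i] = alive with i infections, [None] = dead. *)
Definition config (V : finType) := V -> option nat.

Section MVCP.
Variables (R : realType) (V : finType) (e : rel V).
Variables (lam : R) (phi : nat -> R).

Definition alive (z : config V) (x : V) : bool := z x != None.
Definition cnt (z : config V) (x : V) : nat := if z x is Some i then i else 0%N.

(* xi = "emptyset": every node is healthy or dead *)
Definition is_empty (z : config V) : bool := [forall x, cnt z x == 0%N].

Definition upd (z : config V) (x : V) (v : option nat) : config V :=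
  fun y => if y == x then v else z y.

(* N_z(x): infections on neighbours still joined to x (dead nodes lose edges) *)
Definition nbr_load (z : config V) (x : V) : nat :=
  \sum_(y | e x y && alive z y) cnt z y.

Definition heal_rate (z : config V) (x : V) : R := (cnt z x)%:R.
Definition inf_rate (z : config V) (x : V) : R :=
  if alive z x then lam * (nbr_load z x)%:R else 0.
Definition total_rate (z : config V) : R :=
  \sum_x (heal_rate z x + inf_rate z x).

(* Probability that the embedded jump chain of the MVCP started at z has not
   reached the empty set during its first n jumps. Each infection arriving at
   a node with i infections kills it w.p. phi(i+1), otherwise count -> i+1. *)
Fixpoint surv_within (n : nat) (z : config V) : R :=
  if is_empty z then 0 else
  match n with
  | 0%N => 1
  | n'.+1 =>
      (\sum_x ( heal_rate z x * surv_within n' (upd z x (Some (cnt z x).-1))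
              + inf_rate z x *
                  ( phi (cnt z x).+1 * surv_within n' (upd z x None)
                  + (1 - phi (cnt z x).+1)
                      * surv_within n' (upd z x (Some (cnt z x).+1)))))
      / total_rate z
  end.

End MVCP.

From Pilot Require Import Defs.
From HB Require Import structures.
From mathcomp Require Import all_boot all_order all_algebra.
From mathcomp Require Import all_classical all_reals all_analysis.
From mathcomp Require Import lra zify.
Import Order.TTheory GRing.Theory Num.Theory.
Local Open Scope classical_set_scope.
Local Open Scope ring_scope.

(* Dead nodes stay dead and a node whose count would exceed
   K := max(M, initial counts) dies, so along every trajectory all counts stay
   at most K and the total number T of infections at most K|V|. A node receives
   infections at rate at most lam T, so every jump is a recovery with
   probability at least q := 1/(1 + |V| lam); hence from any reachable
   configuration the process is extinct within K|V| jumps with probability at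
   least q^(K|V|), and surviving m K|V| jumps has probability at most
   (1 - q^(K|V|))^m. *)

(* One jump of the contraction argument: a recovery, of rate T out of T + I,
   has probability at least p and leads to survival at most (1 - s) b. *)
Lemma recovery_step_le (F : realFieldType) (T I p s b : F) :
  0 <= s -> 0 <= b -> 0 < T + I -> p * (T + I) <= T ->
  (T * ((1 - s) * b) + I * b) / (T + I) <= (1 - s * p) * b.
Proof.
move=> s_ge0 b_ge0 W_gt0 pW_le; rewrite ler_pdivrMr //.
have gap : 0 <= T - p * (T + I) by rewrite subr_ge0.
have := mulr_ge0 (mulr_ge0 s_ge0 b_ge0) gap; nra.
Qed.

Lemma cvg0_nonincreasing_geometric {R : realType} {u : nat -> R} {N : nat} {r : R} :
  0 <= r < 1 -> (forall n, 0 <= u n) -> (forall m n, (m <= n)%N -> u n <= u m) ->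
  (forall m, u (m * N)%N <= r ^+ m) -> u n @[n --> \oo] --> (0 : R^o).
Proof.
move=> /andP[r_ge0 r_lt1] u_ge0 u_noninc u_geom.
have /cvgr0Pnorm_lt rm_cvg0 : (GRing.exp r : R^o ^nat) @ \oo --> 0.
  by apply: cvg_expr; rewrite ger0_norm.
apply/cvgr0Pnorm_lt => eps eps_gt0.
have [m _ /(_ m (leqnn m)) /= rm_lt] := rm_cvg0 eps eps_gt0.
exists (m * N)%N => // n /= le_mNn.
rewrite ger0_norm //; apply: le_lt_trans rm_lt.
rewrite ger0_norm ?exprn_ge0 //.
exact: le_trans (u_noninc _ _ le_mNn) (u_geom m).
Qed.

Section Extinction.
Variables (R : realType) (V : finType) (e : rel V) (lam : R) (phi : nat -> R).
Hypothesis lam_gt0 : 0 < lam.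
Hypothesis phi_range : forall k, 0 <= phi k <= 1.
Let lam_ge0 : 0 <= lam := ltW lam_gt0.

Implicit Types (z : config V) (x : V).
Local Notation surv := (surv_within e lam phi).
Local Notation heal_rate := (heal_rate R).
Local Notation inf_rate := (inf_rate e lam).
Local Notation total_rate := (total_rate e lam).

Definition infections z : nat := \sum_x cnt z x.
Definition inf_total z : R := \sum_x inf_rate z x.

Definition heal_branch n z x : R := surv n (upd z x (Some (cnt z x).-1)).
Definition inf_branch n z x : R :=
  phi (cnt z x).+1 * surv n (upd z x None)
  + (1 - phi (cnt z x).+1) * surv n (upd z x (Some (cnt z x).+1)).

Lemma phi_ge0 k : 0 <= phi k. Proof. by case/andP: (phi_range k). Qed.
Lemma phi_le1 k : phi k <= 1. Proof. by case/andP: (phi_range k). Qed.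

Lemma is_emptyE z : is_empty z = (infections z == 0)%N.
Proof. by rewrite /infections sum_nat_eq0. Qed.

Lemma infections_gt0 z : ~~ is_empty z -> (0 < infections z)%N.
Proof. by rewrite is_emptyE lt0n. Qed.

Lemma nbr_load_le_infections z x : (nbr_load e z x <= infections z)%N.
Proof.
rewrite /nbr_load /infections big_mkcond /=.
by apply: leq_sum => y _; case: ifP.
Qed.

Lemma heal_rate_ge0 z x : 0 <= heal_rate z x.
Proof. exact: ler0n. Qed.

Lemma inf_rate_ge0 z x : 0 <= inf_rate z x.
Proof. by rewrite /Defs.inf_rate; case: ifP => // _; rewrite mulr_ge0. Qed.

Lemma inf_rate_le z x : inf_rate z x <= lam * (infections z)%:R.
Proof.
rewrite /Defs.inf_rate; case: ifP => _; last by rewrite mulr_ge0.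
by rewrite ler_wpM2l // ler_nat nbr_load_le_infections.
Qed.

Lemma inf_total_ge0 z : 0 <= inf_total z.
Proof. exact: sumr_ge0 (fun x _ => inf_rate_ge0 z x). Qed.

Lemma inf_total_le z : inf_total z <= #|V|%:R * (lam * (infections z)%:R).
Proof.
apply: le_trans (ler_sum _ (fun x _ => inf_rate_le z x)) _.
by rewrite sumr_const mulr_natl.
Qed.

Lemma total_rateE z : total_rate z = (infections z)%:R + inf_total z.
Proof. by rewrite /Defs.total_rate big_split /= natr_sum. Qed.

Lemma total_rate_gt0 z : ~~ is_empty z -> 0 < total_rate z.
Proof.
move=> nonempty; rewrite total_rateE ltr_wpDr ?inf_total_ge0 //.
by rewrite ltr0n infections_gt0.
Qed.

Lemma cnt_upd z x v y :
  cnt (upd z x v) y = if y == x then (if v is Some i then i else 0%N) else cnt z y.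
Proof. by rewrite /cnt /upd; case: (y == x). Qed.

Lemma infections_upd_Some z x i :
  (infections (upd z x (Some i)) + cnt z x = infections z + i)%N.
Proof.
rewrite /infections (bigD1 x) //= [in RHS](bigD1 x) //= cnt_upd eqxx.
rewrite (eq_bigr (cnt z)); last by move=> y /negbTE y_neq; rewrite cnt_upd y_neq.
lia.
Qed.

Lemma surv_withinS n z : ~~ is_empty z ->
  surv n.+1 z = (\sum_x (heal_rate z x * heal_branch n z x
                         + inf_rate z x * inf_branch n z x)) / total_rate z.
Proof. by move=> /negbTE /= ->. Qed.

Lemma surv_within_empty n z : is_empty z -> surv n z = 0.
Proof. by case: n => [|n] /= ->. Qed.

Lemma surv_within_ge0 n z : 0 <= surv n z.
Proof.
elim: n z => [|n IH] z /=; case: ifP => // _.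
rewrite divr_ge0 ?sumr_ge0 // => x _.
  rewrite addr_ge0 ?mulr_ge0 ?heal_rate_ge0 ?inf_rate_ge0 ?IH //.
  by rewrite /inf_branch addr_ge0 ?mulr_ge0 ?IH ?phi_ge0 ?subr_ge0 ?phi_le1.
by rewrite addr_ge0 ?heal_rate_ge0 ?inf_rate_ge0.
Qed.

(* When phi (cnt z x).+1 = 1 the surviving branch has weight 0. *)
Lemma inf_branch_le n z x b :
  surv n (upd z x None) <= b ->
  (phi (cnt z x).+1 != 1 -> surv n (upd z x (Some (cnt z x).+1)) <= b) ->
  inf_branch n z x <= b.
Proof.
rewrite /inf_branch; case: eqVneq => [-> dead_le _ | _ dead_le /(_ isT) alive_le].
  by rewrite subrr mul0r addr0 mul1r.
have := phi_ge0 (cnt z x).+1; have := phi_le1 (cnt z x).+1; nra.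
Qed.

Lemma surv_withinS_ub n z a b : ~~ is_empty z ->
  (forall x, (0 < cnt z x)%N -> heal_branch n z x <= a) ->
  (forall x, inf_branch n z x <= b) ->
  surv n.+1 z <= ((infections z)%:R * a + inf_total z * b) / total_rate z.
Proof.
move=> nonempty heal_le inf_le.
rewrite surv_withinS // ler_pM2r ?invr_gt0 ?total_rate_gt0 //.
rewrite /infections natr_sum !mulr_suml -big_split /=.
apply: ler_sum => x _; apply: lerD; last by rewrite ler_wpM2l ?inf_rate_ge0.
rewrite /Defs.heal_rate; case: (posnP (cnt z x)) => [-> | /heal_le le_a].
  by rewrite !mul0r.
by rewrite ler_wpM2l.
Qed.

Lemma surv_within_le1 n z : surv n z <= 1.
Proof.
elim: n z => [|n IH] z; first by rewrite /=; case: ifP.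
have [/(surv_within_empty n.+1) -> // | nonempty] := boolP (is_empty z).
apply: le_trans (@surv_withinS_ub n z 1 1 nonempty _ _) _.
- by move=> x _; exact: IH.
- by move=> x; apply: inf_branch_le.
by rewrite !mulr1 -total_rateE divff // gt_eqF // total_rate_gt0.
Qed.

Lemma surv_within_succ_le n z : surv n.+1 z <= surv n z.
Proof.
elim: n z => [|n IH] z;
  (have [empty | nonempty] := boolP (is_empty z); first by rewrite !surv_within_empty).
  by rewrite [surv 0 z]/= (negbTE nonempty) surv_within_le1.
rewrite !surv_withinS // ler_pM2r ?invr_gt0 ?total_rate_gt0 //.
apply: ler_sum => x _; apply: lerD; apply: ler_wpM2l;
  rewrite ?heal_rate_ge0 ?inf_rate_ge0 ?IH //.
by rewrite lerD // ler_wpM2l ?IH ?phi_ge0 ?subr_ge0 ?phi_le1.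
Qed.

Lemma surv_within_le m n z : (m <= n)%N -> surv n z <= surv m z.
Proof.
move/subnKC <-; elim: (n - m)%N => [|k IH]; first by rewrite addn0.
by rewrite addnS; apply: le_trans IH; exact: surv_within_succ_le.
Qed.

Definition rec_prob : R := (1 + #|V|%:R * lam)^-1.

Lemma rec_prob_den_gt0 : 0 < 1 + #|V|%:R * lam.
Proof. by rewrite ltr_wpDr ?mulr_ge0. Qed.

Lemma rec_prob_gt0 : 0 < rec_prob.
Proof. by rewrite invr_gt0 rec_prob_den_gt0. Qed.

Lemma rec_prob_le1 : rec_prob <= 1.
Proof. by rewrite invf_le1 ?rec_prob_den_gt0 // lerDl mulr_ge0. Qed.

Lemma rec_prob_expr_ge0 j : 0 <= rec_prob ^+ j.
Proof. by rewrite exprn_ge0 // ltW // rec_prob_gt0. Qed.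

Lemma rec_prob_expr_le1 j : rec_prob ^+ j <= 1.
Proof. by rewrite exprn_ile1 ?rec_prob_le1 // ltW // rec_prob_gt0. Qed.

Lemma one_sub_rec_prob_expr_itv j : 0 <= 1 - rec_prob ^+ j < 1.
Proof.
rewrite subr_ge0 rec_prob_expr_le1 ltrBlDr ltrDl.
by rewrite exprn_gt0 // rec_prob_gt0.
Qed.

Lemma rec_prob_total_rate_le z : rec_prob * total_rate z <= (infections z)%:R.
Proof.
rewrite mulrC ler_pdivrMr ?rec_prob_den_gt0 // total_rateE.
have := inf_total_le z; nra.
Qed.

Variable K : nat.
Hypothesis phiK : forall k, (K < k)%N -> phi k = 1.

Definition bounded z := forall x, (cnt z x <= K)%N.

Lemma bounded_upd_None z x : bounded z -> bounded (upd z x None).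
Proof. by move=> zK y; rewrite cnt_upd; case: eqP. Qed.

Lemma bounded_upd_Some z x i : bounded z -> (i <= K)%N -> bounded (upd z x (Some i)).
Proof. by move=> zK iK y; rewrite cnt_upd; case: eqP. Qed.

Lemma inf_branch_bounded_le n z x b : bounded z ->
  (forall z', bounded z' -> surv n z' <= b) -> inf_branch n z x <= b.
Proof.
move=> zK surv_le; apply: inf_branch_le; first exact/surv_le/bounded_upd_None.
move=> phi_neq1; apply/surv_le/bounded_upd_Some => //.
by rewrite leqNgt; apply: contra phi_neq1 => /phiK ->.
Qed.

Lemma surv_within_contract n b : 0 <= b ->
  (forall z, bounded z -> surv n z <= b) ->
  forall j z, bounded z -> (infections z <= j)%N ->
  surv (n + j) z <= (1 - rec_prob ^+ j) * b.
Proof.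
move=> b_ge0 surv_le j; elim: j => [|j IH] z zK le_infj.
  by rewrite surv_within_empty ?is_emptyE -?leqn0 // expr0 subrr mul0r.
have [/(surv_within_empty (n + j.+1)) -> | nonempty] := boolP (is_empty z).
  by rewrite mulr_ge0 // subr_ge0 rec_prob_expr_le1.
rewrite addnS exprSr.
apply: le_trans (@surv_withinS_ub _ z ((1 - rec_prob ^+ j) * b) b nonempty _ _) _.
- move=> x cnt_gt0; apply: IH; first by apply: bounded_upd_Some => //; have := zK x; lia.
  by have := infections_upd_Some z x (cnt z x).-1; lia.
- move=> x; apply: inf_branch_bounded_le => // z' z'K.
  exact: le_trans (surv_within_le _ _ _ (leq_addr _ _)) (surv_le z' z'K).
rewrite total_rateE; apply: recovery_step_le => //; rewrite -?total_rateE.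
- exact: rec_prob_expr_ge0.
- exact: total_rate_gt0.
- exact: rec_prob_total_rate_le.
Qed.

Definition horizon : nat := (K * #|V|)%N.

Lemma infections_le_horizon z : bounded z -> (infections z <= horizon)%N.
Proof.
move=> zK; rewrite /horizon mulnC -sum_nat_const.
exact: leq_sum (fun x _ => zK x).
Qed.

Lemma surv_within_geometric m z : bounded z ->
  surv (m * horizon) z <= (1 - rec_prob ^+ horizon) ^+ m.
Proof.
elim: m z => [|m IH] z zK; first by rewrite mul0n expr0 surv_within_le1.
rewrite mulSn addnC exprS; apply: surv_within_contract => //.
- by rewrite exprn_ge0 //; case/andP: (one_sub_rec_prob_expr_itv horizon).
- exact: infections_le_horizon.
Qed.

End Extinction.

Theorem theorem2p1 (R : realType) (V : finType) (e : rel V)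
  (He_sym : symmetric e) (He_irr : irreflexive e)
  (phi : nat -> R) (M : nat)
  (phi_mono : forall m n : nat, (m <= n)%N -> phi m <= phi n)
  (phi_range : forall k : nat, 0 <= phi k <= 1)
  (phi0 : phi 0%N = 0)
  (phiM : forall k : nat, (M <= k)%N -> phi k = 1)
  (lam : R) (lam_gt0 : 0 < lam)
  (z0 : config V) :
  surv_within e lam phi n z0 @[n --> \oo] --> (0 : R^o).
Proof.
pose K := maxn M (\max_x cnt z0 x).
have z0K : bounded V K z0 by move=> x; rewrite leq_max leq_bigmax orbT.
have phiK k : (K < k)%N -> phi k = 1.
  by move=> /ltnW le_Kk; apply/phiM/(leq_trans (leq_maxl _ _) le_Kk).
apply: (cvg0_nonincreasing_geometric
          (one_sub_rec_prob_expr_itv _ _ _ lam_gt0 (horizon V K))).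
- by move=> n; apply: surv_within_ge0.
- by move=> m n; apply: surv_within_le.
- by move=> m; apply: surv_within_geometric.
Qed.
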